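(* Let $T$ be a finite triangulation of a $d$-dimensional manifold $N$, equipped with a branching structure. Let $T^k$ denote its set of $k$-simplices, and let $\tilde a\in C^0(N,\mathbb{Z}_2)$. Then, modulo 2, $$\sum_{k=0}^{d}\ \sum_{\langle v_0\cdots v_k\rangle\in T^k}\tilde a(v_0)\tilde a(v_1)\cdots\tilde a(v_k)\ \equiv\ \sum_{j=0}^{d} w_{d-j}\big(\tilde a\cup\underbrace{\delta\tilde a\cup\cdots\cup\delta\tilde a}_{j\text{ times}}\big),$$ where $w_{d-j}\in C_j(N,\mathbb{Z}_2)$ are the chains defined in the context, and $w(\phi)$ denotes the chain–cochain pairing.
   Context: Simplices are written $\langle v_0\cdots v_q\rangle$ with vertices in the order given by the branching structure. The cup product of $\mathbb{Z}_2$-cochains is $$(\alpha\cup\beta)(v_0\cdots v_{p+q})=\alpha(v_0\cdots v_p)\beta(v_p\cdots v_{p+q}),$$ and $(\delta\tilde a)(v_0v_1)=\tilde a(v_0)+\tilde a(v_1)$. For a $q$-simplex $t=\langle 0\,1\cdots q\rangle$ (vertices labelled in branching order) define chains $\partial_p(t)\in C_p(N,\mathbb{Z}_2)$ as follows. - If $p=2k$ is even, $\partial_p(t)=\sum\langle 0,i_1,i_1{+}1,i_2,i_2{+}1,\dots,i_k,i_k{+}1\rangle$, summed over integers with $1\le i_1$, $i_{r+1}\ge i_r+2$ and $i_k\le q-1$. - If $p=2k+1$ is odd, $\partial_p(t)=\sum\langle 0,i_1,i_1{+}1,\dots,i_k,i_k{+}1,q\rangle$, summed over integers with $1\le i_1$,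 $i_{r+1}\ge i_r+2$ and $i_k\le q-2$. In particular $\partial_0(t)=\langle0\rangle$ and $\partial_1(t)=\langle0q\rangle$ for $q\ge1$. Then $$w_{d-p}=\sum_{q\ge p}\ \sum_{t\in T^q}\partial_p(t)\in C_p(N,\mathbb{Z}_2).$$ In particular $w_0$ is the sum of all $d$-simplices. *)

From mathcomp Require Import all_boot all_order all_algebra.
Set Implicit Arguments. Unset Strict Implicit. Unset Printing Implicit Defensive.
Import GRing.Theory.
Local Open Scope ring_scope.

(* A finite simplicial complex with a branching structure on a finite
   vertex type V is given as a list K of ordered simplices: each simplex is the
   list [:: v_0; ...; v_q] of its vertices written in branching order.
   Z_2-valued p-cochains are functions on such ordered lists (only evaluated on
   lists of length p+1); p-chains are formal sums, represented as lists of
   ordered simplices (multiplicity taken mod 2 through the pairing). *)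

Definition cochain (V : Type) := seq V -> 'F_2.

Definition branched_complex (V : eqType) (d : nat) (K : seq (seq V)) : Prop :=
  [/\ uniq K,
      (forall s, s \in K -> s != [::] /\ uniq s),
      (forall s t, s \in K -> subseq t s -> t != [::] -> t \in K),
      (* each simplex carries exactly one (branching) order *)
      (forall s t, s \in K -> t \in K -> perm_eq s t -> s = t)
    &
      (forall s, s \in K -> (size s <= d.+1)%N) /\
      (exists2 s, s \in K & size s = d.+1)].

Definition c0 (V : Type) (a : V -> 'F_2) : cochain V :=
  fun s => if s is [:: v] then a v else 0.

Definition delta0 (V : Type) (a : V -> 'F_2) : cochain V :=
  fun s => if s is [:: v0; v1] then a v0 + a v1 else 0.

Definition cup (V : Type) (p : nat) (al be : cochain V) : cochain V :=
  fun s => al (take p.+1 s) * be (drop p s).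

Fixpoint cup_delta_pow (V : Type) (a : V -> 'F_2) (j : nat) : cochain V :=
  if j is j'.+1 then cup j' (cup_delta_pow a j') (delta0 a) else c0 a.

Fixpoint gap_seqs (k lo hi : nat) : seq (seq nat) :=
  if k is k'.+1 then
    flatten [seq [seq i :: r | r <- gap_seqs k' i.+2 hi] | i <- iota lo (hi.+1 - lo)]
  else [:: [::]].

(* index list <0, i1, i1+1, ..., ik, ik+1> (even p = 2k)
   or <0, i1, i1+1, ..., ik, ik+1, q> (odd p = 2k+1) *)
Definition bd_indices (p q : nat) : seq (seq nat) :=
  if odd p then
    [seq 0%N :: flatten [seq [:: i; i.+1] | i <- r] ++ [:: q] | r <- gap_seqs p./2 1 (q - 2)]
  else
    [seq 0%N :: flatten [seq [:: i; i.+1] | i <- r] | r <- gap_seqs p./2 1 (q - 1)].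

Definition face_at (V : Type) (t : seq V) (idx : seq nat) : seq V :=
  mask [seq (i \in idx) | i <- iota 0 (size t)] t.

Definition bd_chain (V : Type) (p : nat) (t : seq V) : seq (seq V) :=
  [seq face_at t idx | idx <- bd_indices p (size t).-1].

(* w_{d-p} = sum_{q >= p} sum_{t in T^q} partial_p(t), a p-chain *)
Definition w_chain (V : Type) (K : seq (seq V)) (p : nat) : seq (seq V) :=
  flatten [seq bd_chain p t | t <- K & (p < size t)%N].

Definition pairing (V : Type) (c : seq (seq V)) (phi : cochain V) : 'F_2 :=
  \sum_(s <- c) phi s.

From mathcomp Require Import all_boot all_order all_algebra.
From mathcomp Require Import zify.
Import GRing.Theory.
Local Open Scope ring_scope.

(* Over F_2, the cochain a ∪ δa ∪ ... ∪ δa takes the value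
   f_0 (f_0 + f_1) (f_1 + f_2) ... (f_{j-1} + f_j) on a j-simplex with vertex
   values f_0, ..., f_j.  Hence on a q-simplex t with vertex values f_0, ..., f_q
   the faces <0, i_1, i_1+1, ..., i_k, i_k+1> and <0, i_1, i_1+1, ..., i_k, i_k+1, q>
   contribute f_0 times an alternating product of such differences.  Deciding
   whether the first free vertex is skipped or starts a pair (i, i+1) gives a
   recursion showing that all these contributions add up to
   f_0 (1 + f_0 + f_1) ... (1 + f_0 + f_q) = f_0 f_1 ... f_q, which is the
   contribution of t to the left-hand side. *)

Lemma F2_cases (x : 'F_2) : x = 0 \/ x = 1.
Proof. case: x => [[|[|n]] Hn]; [left|right|by []]; exact: val_inj. Qed.

Lemma F2_add1 : 1 + 1 = 0 :> 'F_2.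
Proof. exact: val_inj. Qed.

Lemma F2_addxx (u : 'F_2) : u + u = 0.
Proof. by case: (F2_cases u) => ->; rewrite ?addr0 ?F2_add1. Qed.

(* If [z = x] the second summand is [(x + y) * P x], as [(x + y)^2 = x + y];
   otherwise [z = x + 1], so that [1 + x + z] and [(x + y) * (y + z)] vanish. *)
Lemma F2_delta_step (P : 'F_2 -> 'F_2) (x y z : 'F_2) :
  (1 + x + z) * P x + (x + y) * (y + z) * P z = (1 + x + y) * ((1 + x + z) * P x).
Proof.
by case: (F2_cases x) => ->; case: (F2_cases y) => ->; case: (F2_cases z) => ->;
  do 2!rewrite ?addr0 ?add0r ?F2_add1 ?mul0r ?mulr0 ?mul1r ?mulr1 ?F2_addxx.
Qed.

Fixpoint delta_prod (x : 'F_2) (us : seq 'F_2) : 'F_2 :=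
  if us is y :: us' then (x + y) * delta_prod y us' else 1.

Definition cup_val (us : seq 'F_2) : 'F_2 :=
  if us is u :: us' then u * delta_prod u us' else 0.

Lemma delta_prod_rcons x us w :
  delta_prod x (rcons us w) = delta_prod x us * (last x us + w).
Proof. by elim: us x => [|u us IH] x /=; [rewrite mul1r mulr1 | rewrite IH mulrA]. Qed.

Lemma cup_val_rcons us u w :
  cup_val (rcons (rcons us u) w) = cup_val (rcons us u) * (u + w).
Proof.
case: us => [|v us] /=; first by rewrite !mulr1.
by rewrite delta_prod_rcons last_rcons mulrA.
Qed.

Lemma cup_delta_pow_map (V : Type) (a : V -> 'F_2) j s :
  size s = j.+1 -> cup_delta_pow a j s = cup_val (map a s).
Proof.
elim: j s => [|j IH] s.
  by case: s => [|v []] //= _; rewrite mulr1.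
case/lastP: s => [|s y] //; case/lastP: s => [|s z] //.
rewrite !size_rcons => -[size_s] /=; rewrite /cup.
have -> : take j.+1 (rcons (rcons s z) y) = rcons s z.
  by rewrite -cats1 take_size_cat // size_rcons size_s.
have -> : drop j (rcons (rcons s z) y) = [:: z; y].
  by rewrite -!cats1 -catA drop_size_cat.
by rewrite IH ?size_rcons ?size_s // !map_rcons cup_val_rcons.
Qed.

Lemma gap_seqsS k lo hi : (lo <= hi)%N ->
  gap_seqs k.+1 lo hi =
  [seq lo :: r | r <- gap_seqs k lo.+2 hi] ++ gap_seqs k.+1 lo.+1 hi.
Proof. by move=> lo_hi; rewrite /= subSn. Qed.

Lemma gap_seqs_nil k lo hi : (hi < lo + k.*2)%N -> gap_seqs k.+1 lo hi = [::].
Proof.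
elim: k lo => [|k IH] lo hi_lt.
  by rewrite /=; have -> : (hi.+1 - lo = 0)%N by rewrite addn0 in hi_lt; lia.
change (flatten [seq [seq i :: r | r <- gap_seqs k.+1 i.+2 hi]
                 | i <- iota lo (hi.+1 - lo)] = [::]).
rewrite (_ : map _ _ = [seq [::] | i <- iota lo (hi.+1 - lo)]); first by elim: iota.
apply/eq_in_map => i.
by rewrite mem_iota => /andP [lo_i _]; rewrite IH //; rewrite doubleS in hi_lt; lia.
Qed.

Definition pairs (r : seq nat) : seq nat := flatten [seq [:: i; i.+1] | i <- r].

Lemma size_pairs r : size (pairs r) = (size r).*2.
Proof. by elim: r => //= i r IH; rewrite IH doubleS. Qed.

Lemma size_gap_seqs {k lo hi r} : r \in gap_seqs k lo hi -> size r = k.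
Proof.
elim: k lo r => [|k IH] lo r /=; first by rewrite inE => /eqP ->.
by case/flatten_mapP => i _ /mapP [r' /IH /= <- ->].
Qed.

(* The conjunct [lo <= hi] matters when [hi] is a truncated difference. *)
Lemma pairs_gap_seqs {k lo hi r} : r \in gap_seqs k lo hi ->
  sorted ltn (pairs r) /\ all (fun i => [&& lo <= i, i <= hi.+1 & lo <= hi])%N (pairs r).
Proof.
elim: k lo r => [|k IH] lo r /=; first by rewrite inE => /eqP ->.
case/flatten_mapP => i; rewrite mem_iota => i_range /mapP [r' /IH [sorted_r' bound_r'] ->].
split; last first.
  rewrite /=; apply/and3P; split; try lia.
  by apply: sub_all bound_r' => j; lia.
rewrite /= ltnSn path_min_sorted //.
by apply: sub_all bound_r' => j /=; lia.
Qed.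

Lemma map_face_at (T U : Type) (g : T -> U) (s : seq T) idx :
  map g (face_at s idx) = face_at (map g s) idx.
Proof. by rewrite /face_at map_mask size_map. Qed.

Lemma face_at_nth {T : Type} (x0 : T) (s : seq T) idx :
  sorted ltn idx -> all (gtn (size s)) idx ->
  face_at s idx = map (nth x0 s) idx.
Proof.
move=> sorted_idx idx_lt.
rewrite /face_at -{2}(mkseq_nth x0 s) /mkseq -map_mask -filter_mask.
congr map; apply: (irr_sorted_eq ltn_trans ltnn).
- by apply: sorted_filter; [exact: ltn_trans | exact: iota_ltn_sorted].
- exact: sorted_idx.
move=> i; rewrite mem_filter mem_iota /= add0n andb_idr //.
by move/(allP idx_lt).
Qed.

Section FaceSums.
Variable f : nat -> 'F_2.

(* Sums, over the ways to continue a face whose last chosen vertex has value [x]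
   by k pairs of consecutive positions among [lo.+1, ..., lo + n] (followed, for
   [odd_sum], by the vertex [lo + n]), of the product of the differences of [f]
   along the continuation. *)
Definition even_sum k x lo n : 'F_2 :=
  \sum_(r <- gap_seqs k lo.+1 (lo + n - 1)%N) delta_prod x (map f (pairs r)).

Definition odd_sum k x lo n : 'F_2 :=
  if n is n'.+1 then
    \sum_(r <- gap_seqs k lo.+1 (lo + n' - 1)%N)
      delta_prod x (map f (pairs r ++ [:: (lo + n)%N]))
  else 0.

Definition face_sum N x lo n : 'F_2 :=
  \sum_(k < N) (even_sum k x lo n + odd_sum k x lo n).

Lemma even_sum0 x lo n : even_sum 0 x lo n = 1.
Proof. by rewrite /even_sum big_seq1. Qed.

Lemma odd_sum0 x lo n : odd_sum 0 x lo n.+1 = x + f (lo + n.+1)%N.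
Proof. by rewrite /odd_sum big_seq1 /= mulr1. Qed.

Lemma even_sum_eq0 k x lo n : (n < k.*2)%N -> even_sum k x lo n = 0.
Proof.
case: k => [//|k] n_lt; rewrite /even_sum gap_seqs_nil ?big_nil //.
by rewrite doubleS in n_lt; lia.
Qed.

Lemma odd_sum_eq0 k x lo n : (n < k.*2.+1)%N -> odd_sum k x lo n = 0.
Proof.
case: n => [//|n]; case: k => [//|k] n_lt; rewrite /odd_sum gap_seqs_nil ?big_nil //.
by rewrite doubleS in n_lt; lia.
Qed.

(* The first free position [lo.+1] is either skipped or starts a pair. *)
Lemma even_sumS k x lo n :
  even_sum k.+1 x lo n.+2 = (x + f lo.+1) * (f lo.+1 + f lo.+2) * even_sum k (f lo.+2) lo.+2 n
                            + even_sum k.+1 x lo.+1 n.+1.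
Proof.
rewrite /even_sum !addSn !addnS gap_seqsS; last by lia.
rewrite big_cat big_map big_distrr; congr (_ + _).
by apply: eq_bigr => r _ /=; rewrite mulrA.
Qed.

Lemma odd_sumS k x lo n :
  odd_sum k.+1 x lo n.+2 = (x + f lo.+1) * (f lo.+1 + f lo.+2) * odd_sum k (f lo.+2) lo.+2 n
                           + odd_sum k.+1 x lo.+1 n.+1.
Proof.
case: n => [|n].
  by rewrite /odd_sum !gap_seqs_nil ?big_nil ?mulr0 ?addr0 //; lia.
rewrite /odd_sum !addSn !addnS gap_seqsS; last by lia.
rewrite big_cat big_map big_distrr; congr (_ + _).
by apply: eq_bigr => r _ /=; rewrite mulrA.
Qed.

Lemma face_sumS N x lo n :
  face_sum N.+1 x lo n.+2 = (x + f lo.+1) * (f lo.+1 + f lo.+2) * face_sum N (f lo.+2) lo.+2 n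
                            + face_sum N.+1 x lo.+1 n.+1.
Proof.
rewrite /face_sum !big_ord_recl !even_sum0 !odd_sum0 addSnnS [RHS]addrCA; congr (_ + _).
rewrite big_distrr -big_split; apply: eq_bigr => k _.
by rewrite lift0 even_sumS odd_sumS addrACA -mulrDr.
Qed.

Lemma face_sum_small N x lo n : (n <= 1)%N ->
  face_sum N.+1 x lo n = \prod_(i <- iota lo.+1 n) (1 + x + f i).
Proof.
move=> n_le1; rewrite /face_sum big_ord_recl even_sum0 big1 ?addr0 => [|k _].
  by case: n n_le1 => [|[|]] //; rewrite ?big_nil ?big_seq1 ?odd_sum0 ?addn1 ?addr0 ?addrA.
by rewrite even_sum_eq0 ?odd_sum_eq0 ?addr0 //=; rewrite doubleS; lia.
Qed.

Lemma face_sum_prod N x lo n : (n < N)%N ->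
  face_sum N x lo n = \prod_(i <- iota lo.+1 n) (1 + x + f i).
Proof.
elim/ltn_ind: n N x lo => n IH [//|N] x lo n_lt.
case: (leqP n 1) => [|n_gt1]; first exact: face_sum_small.
case: n n_lt IH n_gt1 => [|[|n]] // n_lt IH _.
rewrite face_sumS !IH //; try lia.
rewrite [iota _ n.+2]/= [iota _ n.+1]/= !big_cons addrC.
exact: (F2_delta_step (fun w => \prod_(i <- iota lo.+3 n) (1 + w + f i))).
Qed.
End FaceSums.

Lemma sum_ord_double (R : nmodType) (F : nat -> R) n :
  \sum_(j < n.*2) F j = \sum_(k < n) (F k.*2 + F k.*2.+1).
Proof.
elim: n => [|n IH]; first by rewrite !big_ord0.
by rewrite doubleS !big_ord_recr /= IH addrA.
Qed.

Section SimplexFaces.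
Variables (V : Type) (a : V -> 'F_2) (t : seq V) (q : nat).
Hypotheses (size_t : size t = q.+1) (q_gt0 : (0 < q)%N).
Let f := nth 0 (map a t).

Lemma cup_delta_pow_face j idx :
  sorted ltn idx -> all (gtn q.+1) idx -> size idx = j.+1 ->
  cup_delta_pow a j (face_at t idx) = cup_val (map f idx).
Proof.
move=> sorted_idx idx_lt size_idx.
have face_vals : map a (face_at t idx) = map f idx.
  by rewrite map_face_at (face_at_nth 0) // size_map size_t.
by rewrite cup_delta_pow_map ?face_vals // -(size_map a) face_vals size_map.
Qed.

Lemma pairing_bd_chain_even k :
  pairing (bd_chain k.*2 t) (cup_delta_pow a k.*2) = f 0 * even_sum f k (f 0) 0 q.
Proof.
rewrite /pairing /bd_chain /bd_indices odd_double doubleK size_t /= !big_map.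
rewrite /even_sum big_distrr add0n; apply: eq_big_seq => r r_gap.
rewrite -/(pairs r); have [sorted_r bounds_r] := pairs_gap_seqs r_gap.
rewrite cup_delta_pow_face //=.
- by rewrite path_min_sorted //; apply: sub_all bounds_r => i /andP [].
- by apply: sub_all bounds_r => i /=; lia.
- by rewrite size_pairs (size_gap_seqs r_gap).
Qed.

Lemma pairing_bd_chain_odd k :
  pairing (bd_chain k.*2.+1 t) (cup_delta_pow a k.*2.+1) = f 0 * odd_sum f k (f 0) 0 q.
Proof.
rewrite /pairing /bd_chain /bd_indices oddS odd_double /= uphalf_double size_t !big_map.
rewrite -[cup _ _ _]/(cup_delta_pow a k.*2.+1).
have [q' q_eq] : exists q', q = q'.+1 by exists q.-1; lia.
rewrite q_eq /odd_sum big_distrr add0n subSS; apply: eq_big_seq => r r_gap.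
rewrite -/(pairs r); have [sorted_r bounds_r] := pairs_gap_seqs r_gap.
have pairs_lt i : i \in pairs r -> (0 < i < q'.+1)%N by move/(allP bounds_r); lia.
rewrite cup_delta_pow_face //=.
- rewrite cat_path path_min_sorted /=; last by apply/allP => i /pairs_lt /andP [].
  rewrite sorted_r andbT; have := mem_last 0 (pairs r).
  by rewrite inE => /orP [/eqP -> | /pairs_lt /andP []].
- by rewrite all_cat /= q_eq ltnSn !andbT; apply/allP => i /pairs_lt /=; lia.
- by rewrite size_cat size_pairs (size_gap_seqs r_gap) addn1.
Qed.

Lemma pairing_bd_chain_eq0 j : (q < j)%N -> pairing (bd_chain j t) (cup_delta_pow a j) = 0.
Proof.
have := odd_double_half j; case: odd => /= <-; move: j./2 => k j_gt.
  by rewrite add1n pairing_bd_chain_odd odd_sum_eq0 ?mulr0 //; rewrite -addnn in j_gt *; lia.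
by rewrite add0n pairing_bd_chain_even even_sum_eq0 ?mulr0 //; rewrite -addnn in j_gt *; lia.
Qed.

Lemma sum_pairing_bd_chain_gt0 :
  \sum_(j < q.+1) pairing (bd_chain j t) (cup_delta_pow a j) = \prod_(v <- t) a v.
Proof.
rewrite (big_ord_widen (q.+1).*2 (fun j => pairing (bd_chain j t) (cup_delta_pow a j)));
  last by rewrite -addnn leq_addr.
rewrite big_mkcond (eq_bigr (fun j : 'I__ => pairing (bd_chain j t) (cup_delta_pow a j))); last first.
  by move=> j _; case: ltnP => // j_gt; rewrite pairing_bd_chain_eq0.
rewrite (@sum_ord_double _ (fun j => pairing (bd_chain j t) (cup_delta_pow a j))).
rewrite (eq_bigr (fun k : 'I__ => f 0 * (even_sum f k (f 0) 0 q + odd_sum f k (f 0) 0 q)));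
  last by move=> k _; rewrite pairing_bd_chain_even pairing_bd_chain_odd mulrDr.
rewrite -big_distrr -/(face_sum f q.+1 (f 0) 0 q) face_sum_prod //.
have map_a : map a t = map f (iota 0 q.+1).
  by rewrite -size_t -(size_map a); exact: (esym (mkseq_nth 0 _)).
have -> : \prod_(v <- t) a v = \prod_(i <- iota 0 q.+1) f i.
  by rewrite -(big_map a predT id) map_a big_map.
rewrite big_cons /=; case: (F2_cases (f 0)) => ->; first by rewrite !mul0r.
by rewrite !mul1r; apply: eq_bigr => i _; rewrite F2_add1 add0r.
Qed.

End SimplexFaces.

Lemma sum_pairing_bd_chain (V : Type) (a : V -> 'F_2) (t : seq V) : (0 < size t)%N ->
  \sum_(j < size t) pairing (bd_chain j t) (cup_delta_pow a j) = \prod_(v <- t) a v.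
Proof.
case: t => [//|v [|w t]] _; last exact: sum_pairing_bd_chain_gt0.
by rewrite big_ord1 big_seq1 /pairing /bd_chain /= big_seq1.
Qed.

Lemma pairing_w_chain {V : Type} (K : seq (seq V)) p (phi : cochain V) :
  pairing (w_chain K p) phi = \sum_(t <- K | (p < size t)%N) pairing (bd_chain p t) phi.
Proof. by rewrite /pairing /w_chain big_flatten big_map big_filter. Qed.

Theorem proposition5 (d : nat) (V : finType) (K : seq (seq V))
    (hK : branched_complex d K) (a : V -> 'F_2) :
  \sum_(k < d.+1) \sum_(s <- K | size s == k.+1) \prod_(v <- s) a v
  = \sum_(j < d.+1) pairing (w_chain K j) (cup_delta_pow a j).
Proof.
case: hK => _ nonempty _ _ [size_le _].
rewrite [RHS](eq_bigr _ (fun (j : 'I_d.+1) _ => pairing_w_chain K j (cup_delta_pow a j))).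
rewrite (exchange_big_dep xpredT) // [RHS](exchange_big_dep xpredT) //=.
apply: eq_big_seq => t tK.
have t_gt0 : (0 < size t)%N by rewrite lt0n size_eq0; case: (nonempty t tK).
rewrite -(big_ord_widen _ (fun j => pairing (bd_chain j t) (cup_delta_pow a j))) ?size_le //.
rewrite sum_pairing_bd_chain //.
have t_lt : ((size t).-1 < d.+1)%N by rewrite prednK ?size_le.
rewrite (big_pred1 (Ordinal t_lt)) // => k /=.
by rewrite -val_eqE /= -[size t in LHS](prednK t_gt0) eqSS eq_sym.
Qed.
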